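(* For every finite zero-set $\mathcal Z$ there exists a time $T_{\max}=T_{\max}(\mathcal Z)$ such that for every set $A\subseteq\mathbb Z_+^2$ (not necessarily finite), $\mathcal T^{T_{\max}+1}(A)=\mathcal T^{T_{\max}}(A)$.
   Context: $\mathbb Z_+=\{0,1,2,\dots\}$, $R_{a,b}=([0,a-1]\times[0,b-1])\cap\mathbb Z_+^2$; a zero-set is a set $\mathcal Z\subseteq\mathbb Z_+^2$ that is a union of such rectangles. For $A\subseteq\mathbb Z_+^2$ and $x\in\mathbb Z_+^2$, $\mathrm{row}(x,A)$ (resp. $\mathrm{col}(x,A)$) is the (possibly infinite) number of points of $A$ on the horizontal (resp. vertical) line through $x$, and $\mathcal T(A)=A\cup\{x\notin A:(\mathrm{row}(x,A),\mathrm{col}(x,A))\notin\mathcal Z\}$ (a pair with an infinite coordinate is never in $\mathcal Z$). *)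

From Stdlib Require Import List Arith.
Import ListNotations.

Definition pt := (nat * nat)%type.
Definition pset := pt -> Prop.

Definition rect (a b : nat) : pset := fun x => fst x < a /\ snd x < b.

Definition zero_set (Z : pset) : Prop :=
  exists F : nat -> nat -> Prop,
    forall x, Z x <-> exists a b, F a b /\ rect a b x.

Definition finite_pset (Z : pset) : Prop :=
  exists l : list pt, forall x, Z x -> In x l.

Definition has_card (P : nat -> Prop) (n : nat) : Prop :=
  exists l : list nat, NoDup l /\ length l = n /\ (forall y, P y <-> In y l).

Definition row_pts (x : pt) (A : pset) : nat -> Prop := fun y => A (y, snd x).
Definition col_pts (x : pt) (A : pset) : nat -> Prop := fun y => A (fst x, y).

(* (row(x,A), col(x,A)) is in Z: both counts finite and the pair lies in Z;
   a pair with an infinite coordinate is never in Z. *)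
Definition rowcol_in (Z : pset) (A : pset) (x : pt) : Prop :=
  exists r c, has_card (row_pts x A) r /\ has_card (col_pts x A) c /\ Z (r, c).

Definition T_step (Z : pset) (A : pset) : pset :=
  fun x => A x \/ (~ A x /\ ~ rowcol_in Z A x).

Definition T_iter (Z : pset) (n : nat) (A : pset) : pset := Nat.iter n (T_step Z) A.

From Stdlib Require Import List Arith Lia Classical FunctionalExtensionality PropExtensionality.
Import ListNotations.

(* Choose N with every pair of Z below (N, N). A row or column holding at
   least N points of B lies entirely in T(B), and full lines stay full, so
   once 2N lines are full the next step fills the quadrant. In a run of
   N^2 + 2 consecutive steps that each add a point, some line must become
   full: otherwise every non-full line carries fewer than N points, and
   comparing with the non-full row and the non-full column of largest count
   shows that every point added during the first N^2 + 1 steps lies in a box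
   with fewer than N^2 points. Hence the dynamics is stationary after
   2N(N^2 + 2) + 1 steps. *)

Definition atleast (P : nat -> Prop) (n : nat) : Prop :=
  exists l : list nat, NoDup l /\ n <= length l /\ forall y, In y l -> P y.

Lemma has_card_le_incl (P Q : nat -> Prop) r r' :
  (forall y, P y -> Q y) -> has_card P r -> has_card Q r' -> r <= r'.
Proof.
  intros HPQ (l & Hl & <- & HP) (l' & Hl' & <- & HQ).
  apply NoDup_incl_length; [exact Hl|]. intros y Hy. apply HQ, HPQ, HP, Hy.
Qed.

Lemma has_card_unique P r r' : has_card P r -> has_card P r' -> r = r'.
Proof. intros H H'. apply Nat.le_antisymm; eapply has_card_le_incl; eauto. Qed.

Lemma atleast_le_card P n r : atleast P n -> has_card P r -> n <= r.
Proof.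
  intros (l & Hl & Hn & HP) (l' & _ & <- & HP').
  enough (length l <= length l') by lia.
  apply NoDup_incl_length; [exact Hl|]. intros y Hy. apply HP', HP, Hy.
Qed.

Lemma has_card_lt_of_not_atleast P n : ~ atleast P n -> exists r, r < n /\ has_card P r.
Proof.
  induction n as [|n IH]; intros Hfew.
  - exfalso. apply Hfew. exists []. repeat split; [constructor | lia | intros y []].
  - destruct (classic (atleast P n)) as [(l & Hl & Hn & HP) | Hn].
    + assert (Hlen : length l = n).
      { apply Nat.le_antisymm; [|exact Hn]. apply Nat.nlt_ge. intros Hlt.
        apply Hfew. exists l. auto. }
      exists (length l). split; [lia|]. exists l. repeat split; [exact Hl| |apply HP].
      intros Hy. apply NNPP. intros Hy'. apply Hfew.
      exists (y :: l). repeat split; [constructor; auto | simpl; lia |].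
      intros z [<- | Hz]; auto.
    + destruct (IH Hn) as (r & Hr & Hcard). exists r. split; [lia | exact Hcard].
Qed.

Lemma bounded_ex_max (P : nat -> Prop) n :
  (forall r, P r -> r < n) -> (exists r, P r) ->
  exists r, P r /\ forall r', P r' -> r' <= r.
Proof.
  revert P. induction n as [|n IH]; intros P Hlt [r Hr].
  - apply Hlt in Hr. lia.
  - destruct (classic (P n)) as [Hn | Hn].
    + exists n. split; [exact Hn|]. intros r' Hr'. apply Hlt in Hr'. lia.
    + apply IH; [|eauto]. intros r' Hr'.
      destruct (Nat.eq_dec r' n) as [-> | Hne]; [contradiction|].
      apply Hlt in Hr'. lia.
Qed.

Lemma list_pt_bounded (l : list pt) : exists N, forall x, In x l -> fst x < N /\ snd x < N.
Proof.
  induction l as [|[p q] l [N HN]].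
  - exists 0. intros x [].
  - exists (S (max N (max p q))). intros x [<- | Hx]; simpl; [lia|].
    apply HN in Hx. lia.
Qed.

Lemma new_points_bound {X : Type} (C : nat -> X -> Prop) (l : list X) s n :
  (forall t x, C t x -> C (S t) x) ->
  (forall t, s <= t < s + n -> exists x, C (S t) x /\ ~ C t x /\ In x l) ->
  n <= length l.
Proof.
  intros Hmono Hnew.
  assert (Hcollect : forall k, k <= n ->
            exists xs, NoDup xs /\ length xs = k /\ forall x, In x xs -> C (s + k) x /\ In x l).
  { induction k as [|k IH]; intros Hk.
    - exists []. split; [constructor | split; [reflexivity | intros x []]].
    - destruct IH as (xs & Hxs & Hlen & Hin); [lia|].
      destruct (Hnew (s + k) ltac:(lia)) as (x & Hx & Hx' & Hxl).
      exists (x :: xs). rewrite <- plus_n_Sm. split; [|split].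
      + constructor; [|exact Hxs]. intros Hin'. apply Hx', Hin, Hin'.
      + simpl. lia.
      + intros y [<- | Hy]; [auto|]. split; [apply Hmono|]; apply Hin, Hy. }
  destruct (Hcollect n (le_n n)) as (xs & Hxs & <- & Hin).
  apply NoDup_incl_length; [exact Hxs|]. intros x Hx. apply Hin, Hx.
Qed.

(* The line [(true, i)] is the row through height [i], the line [(false, j)]
   the column through abscissa [j]; [line_pt l y] is the point at position
   [y] along [l]. *)
Definition line := (bool * nat)%type.

Definition line_pt (l : line) (y : nat) : pt :=
  if fst l then (y, snd l) else (snd l, y).

Definition line_pts (B : pset) (l : line) : nat -> Prop := fun y => B (line_pt l y).

Definition full_line (B : pset) (l : line) : Prop := forall y, B (line_pt l y).

Definition line_through (b : bool) (x : pt) : line := (b, if b then snd x else fst x).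

Definition pos_on (b : bool) (x : pt) : nat := if b then fst x else snd x.

Lemma line_pt_through b x : line_pt (line_through b x) (pos_on b x) = x.
Proof. destruct b, x; reflexivity. Qed.

Lemma line_through_pt b k y : line_through b (line_pt (b, k) y) = (b, k).
Proof. destruct b; reflexivity. Qed.

Lemma line_through_cross b k x :
  line_through (negb b) (line_pt (b, k) (pos_on b x)) = line_through (negb b) x.
Proof. destruct b; reflexivity. Qed.

Lemma line_pt_transpose b q k : line_pt (negb b, q) k = line_pt (b, k) q.
Proof. destruct b; reflexivity. Qed.

Lemma not_full_line_through (B : pset) x b : ~ B x -> ~ full_line B (line_through b x).
Proof. intros Hx Hfull. apply Hx. rewrite <- (line_pt_through b x). apply Hfull. Qed.

Lemma split_by_orientation (ls : list line) :
  NoDup ls -> exists b ks, NoDup ks /\ length ls <= 2 * length ks /\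
                           forall k, In k ks -> In (b, k) ls.
Proof.
  intros Hnd.
  assert (Hsplit : exists rows cols, NoDup rows /\ NoDup cols /\
            length rows + length cols = length ls /\
            (forall k, In k rows -> In (true, k) ls) /\ (forall k, In k cols -> In (false, k) ls)).
  { induction ls as [|[b k] ls IH].
    - exists [], []. repeat split; [constructor | constructor | intros ? []..].
    - inversion Hnd as [|? ? Hk Hnd']; subst.
      destruct (IH Hnd') as (rows & cols & Hr & Hc & Hlen & Hrows & Hcols).
      destruct b; [exists (k :: rows), cols | exists rows, (k :: cols)];
        repeat split; simpl; try lia; try assumption;
        try (constructor; [intros Hin; apply Hk; auto | assumption]);
        intros k' Hk'; simpl in Hk'; intuition (subst; auto). }
  destruct Hsplit as (rows & cols & Hr & Hc & Hlen & Hrows & Hcols).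
  destruct (le_lt_dec (length cols) (length rows)).
  - exists true, rows. repeat split; [exact Hr | lia | exact Hrows].
  - exists false, cols. repeat split; [exact Hc | lia | exact Hcols].
Qed.

Lemma T_step_of_not_rowcol_in Z B x : ~ rowcol_in Z B x -> T_step Z B x.
Proof. intros Hx. destruct (classic (B x)); [left | right]; tauto. Qed.

Lemma not_rowcol_in_of_added Z B x : ~ B x -> T_step Z B x -> ~ rowcol_in Z B x.
Proof. intros Hout [Hin | [_ Hx]]; tauto. Qed.

Lemma T_iter_S Z n A : T_iter Z (S n) A = T_step Z (T_iter Z n A).
Proof. reflexivity. Qed.

Lemma T_iter_mono Z A t t' x : t <= t' -> T_iter Z t A x -> T_iter Z t' A x.
Proof. intros Hle. induction Hle; intros Hx; [exact Hx|]. rewrite T_iter_S. left. auto. Qed.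

Definition added_at (Z A : pset) (t : nat) (x : pt) : Prop :=
  T_iter Z (S t) A x /\ ~ T_iter Z t A x.

Lemma T_iter_stationary Z A t :
  (forall x, ~ added_at Z A t x) -> forall k, t <= k -> T_iter Z k A = T_iter Z t A.
Proof.
  intros Hstill k Hk.
  assert (Hstep : T_iter Z (S t) A = T_iter Z t A).
  { apply functional_extensionality. intros x. apply propositional_extensionality. split.
    - intros Hx. apply NNPP. intros Hx'. exact (Hstill x (conj Hx Hx')).
    - intros Hx. rewrite T_iter_S. left. exact Hx. }
  induction Hk as [|k Hk IH]; [reflexivity|].
  rewrite T_iter_S, IH, <- T_iter_S. exact Hstep.
Qed.

Lemma full_lines_of_windows Z A L m :
  (forall i, i < m -> exists t l, i * L <= t < i * L + L /\
     full_line (T_iter Z (S t) A) l /\ ~ full_line (T_iter Z t A) l) ->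
  exists ls, NoDup ls /\ length ls = m /\ forall l, In l ls -> full_line (T_iter Z (m * L) A) l.
Proof.
  assert (Hmono : forall t t' l, t <= t' ->
            full_line (T_iter Z t A) l -> full_line (T_iter Z t' A) l).
  { intros t t' l Hle Hfull y. exact (T_iter_mono Z A t t' _ Hle (Hfull y)). }
  induction m as [|m IH]; intros Hwin.
  - exists []. split; [constructor | split; [reflexivity | intros l []]].
  - destruct IH as (ls & Hnd & Hlen & Hfull); [intros i Hi; apply Hwin; lia|].
    destruct (Hwin m (Nat.lt_succ_diag_r m)) as (t & l & Ht & Hl & Hl').
    exists (l :: ls). repeat split.
    + constructor; [|exact Hnd]. intros Hin. apply Hl', (Hmono (m * L)); [lia|].
      apply Hfull, Hin.
    + simpl. lia.
    + intros l' [<- | Hin]; [apply (Hmono (S t)) | apply (Hmono (m * L))];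
        auto; simpl; nia.
Qed.

Lemma zero_set_down_closed Z :
  zero_set Z -> forall r c r' c', Z (r, c) -> r' <= r -> c' <= c -> Z (r', c').
Proof.
  intros [F HF] r c r' c' HZ Hr Hc. apply HF in HZ.
  destruct HZ as (a & b & Hab & Ha & Hb). apply HF.
  exists a, b. split; [exact Hab|]. split; simpl in *; lia.
Qed.

Lemma finite_pset_bounded Z : finite_pset Z -> exists N, forall r c, Z (r, c) -> r < N /\ c < N.
Proof.
  intros [l Hl]. destruct (list_pt_bounded l) as [N HN].
  exists N. intros r c HZ. exact (HN _ (Hl _ HZ)).
Qed.

Section Dynamics.

Variables (Z : pset) (N : nat).
Hypothesis Z_down : forall r c r' c', Z (r, c) -> r' <= r -> c' <= c -> Z (r', c').
Hypothesis Z_bound : forall r c, Z (r, c) -> r < N /\ c < N.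

Lemma T_step_of_atleast_line b B x : atleast (line_pts B (line_through b x)) N -> T_step Z B x.
Proof.
  intros Hmany. apply T_step_of_not_rowcol_in. intros (r & c & Hr & Hc & HZ).
  apply Z_bound in HZ. destruct b.
  - pose proof (atleast_le_card _ _ _ Hmany Hr). lia.
  - pose proof (atleast_le_card _ _ _ Hmany Hc). lia.
Qed.

Lemma full_line_of_atleast B l : atleast (line_pts B l) N -> full_line (T_step Z B) l.
Proof.
  destruct l as [b k]. intros Hmany y. apply (T_step_of_atleast_line b).
  rewrite line_through_pt. exact Hmany.
Qed.

Lemma T_step_full_of_full_lines B ls :
  NoDup ls -> 2 * N <= length ls -> (forall l, In l ls -> full_line B l) ->
  forall x, T_step Z B x.
Proof.
  intros Hnd Hlen Hfull x.
  destruct (split_by_orientation ls Hnd) as (b & ks & Hks & Hlen' & Hin).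
  apply (T_step_of_atleast_line (negb b)). exists ks. repeat split; [exact Hks | lia |].
  intros k Hk. unfold line_pts, line_through. rewrite line_pt_transpose.
  apply Hfull, Hin, Hk.
Qed.

Lemma T_step_dominated b B B' x y r c r' c' :
  ~ B x -> T_step Z B x ->
  has_card (line_pts B (line_through b x)) r ->
  has_card (line_pts B (line_through (negb b) x)) c ->
  has_card (line_pts B' (line_through b y)) r' ->
  has_card (line_pts B' (line_through (negb b) y)) c' ->
  r <= r' -> c <= c' -> T_step Z B' y.
Proof.
  intros Hout Hin Hr Hc Hr' Hc' Hrr Hcc.
  apply T_step_of_not_rowcol_in. intros (r0 & c0 & Hr0 & Hc0 & HZ).
  apply (not_rowcol_in_of_added Z B x Hout Hin). destruct b.
  - rewrite (has_card_unique _ _ _ Hr0 Hr'), (has_card_unique _ _ _ Hc0 Hc') in HZ.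
    exists r, c. repeat split; [exact Hr | exact Hc | eapply Z_down; eauto].
  - rewrite (has_card_unique _ _ _ Hr0 Hc'), (has_card_unique _ _ _ Hc0 Hr') in HZ.
    exists c, r. repeat split; [exact Hc | exact Hr | eapply Z_down; eauto].
Qed.

Section Window.

Variables (A : pset) (s : nat).
Hypothesis added_each_step : forall t, s <= t < s + (N * N + 2) -> exists x, added_at Z A t x.
Hypothesis no_line_filled : forall t l, s <= t < s + (N * N + 2) ->
  full_line (T_iter Z (S t) A) l -> full_line (T_iter Z t A) l.

Lemma full_line_back t k l :
  s <= t <= k -> k <= s + (N * N + 2) -> full_line (T_iter Z k A) l -> full_line (T_iter Z t A) l.
Proof.
  intros [Hs Hle] Hk. induction Hle as [|k Hle IH]; intros Hfull; [exact Hfull|].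
  apply IH; [lia|]. apply no_line_filled; [lia | exact Hfull].
Qed.

Lemma nonfull_line_card t l :
  s <= t < s + (N * N + 2) -> ~ full_line (T_iter Z t A) l ->
  exists r, r < N /\ has_card (line_pts (T_iter Z t A) l) r.
Proof.
  intros Ht Hnf. apply has_card_lt_of_not_atleast. intros Hmany.
  apply Hnf, no_line_filled; [exact Ht|]. exact (full_line_of_atleast _ _ Hmany).
Qed.

Lemma max_nonfull_line b :
  exists k rho, ~ full_line (T_iter Z (s + N * N) A) (b, k) /\
    has_card (line_pts (T_iter Z (s + N * N) A) (b, k)) rho /\
    forall k' r, ~ full_line (T_iter Z (s + N * N) A) (b, k') ->
      has_card (line_pts (T_iter Z (s + N * N) A) (b, k')) r -> r <= rho.
Proof.
  set (B := T_iter Z (s + N * N) A).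
  destruct (bounded_ex_max (fun r => exists k, ~ full_line B (b, k) /\
              has_card (line_pts B (b, k)) r) N) as (rho & (k & Hnf & Hrho) & Hmax).
  - intros r (k & Hnf & Hr).
    destruct (nonfull_line_card (s + N * N) (b, k) ltac:(lia) Hnf) as (r' & Hr' & Hc).
    rewrite (has_card_unique _ _ _ Hr Hc). exact Hr'.
  - destruct (added_each_step s ltac:(lia)) as (x & _ & Hx).
    assert (Hnf : ~ full_line B (line_through b x)).
    { intros Hfull. apply (not_full_line_through _ x b Hx).
      exact (full_line_back s (s + N * N) _ ltac:(lia) ltac:(lia) Hfull). }
    destruct (nonfull_line_card (s + N * N) _ ltac:(lia) Hnf) as (r & _ & Hr).
    exists r, (snd (line_through b x)). split; assumption.
  - exists k, rho. repeat split; [exact Hnf | exact Hrho |].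
    intros k' r Hnf' Hr'. apply Hmax. eauto.
Qed.

Lemma added_points_project b :
  exists lb : list nat, length lb < N /\
    forall t x, s <= t <= s + N * N -> added_at Z A t x -> In (pos_on b x) lb.
Proof.
  destruct (max_nonfull_line b) as (k & rho & Hnf & Hrho & Hmax).
  assert (Hnf' : ~ full_line (T_iter Z (S (s + N * N)) A) (b, k)).
  { intros Hfull. apply Hnf, no_line_filled; [lia | exact Hfull]. }
  destruct (nonfull_line_card (S (s + N * N)) _ ltac:(lia) Hnf') as (n & Hn & lb & _ & Hlen & Hlb).
  exists lb. split; [lia|]. intros t x Ht [Hin Hout].
  assert (Hcard : forall b', exists r r',
            has_card (line_pts (T_iter Z t A) (line_through b' x)) r /\
            has_card (line_pts (T_iter Z (s + N * N) A) (line_through b' x)) r' /\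
            r <= r' /\ ~ full_line (T_iter Z (s + N * N) A) (line_through b' x)).
  { intros b'. pose proof (not_full_line_through _ x b' Hout) as Hnft.
    assert (HnfT : ~ full_line (T_iter Z (s + N * N) A) (line_through b' x)).
    { intros Hfull. apply Hnft. exact (full_line_back t (s + N * N) _ ltac:(lia) ltac:(lia) Hfull). }
    destruct (nonfull_line_card t _ ltac:(lia) Hnft) as (r & _ & Hr).
    destruct (nonfull_line_card (s + N * N) _ ltac:(lia) HnfT) as (r' & _ & Hr').
    exists r, r'. repeat split; [exact Hr | exact Hr' | | exact HnfT].
    eapply has_card_le_incl; [|exact Hr | exact Hr'].
    intros y. apply T_iter_mono. lia. }
  destruct (Hcard b) as (r & r' & Hr & Hr' & Hrr & HnfT).
  destruct (Hcard (negb b)) as (c & c' & Hc & Hc' & Hcc & _).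
  apply Hlb. apply (T_step_dominated b _ _ x _ r c rho c' Hout Hin Hr Hc).
  - rewrite line_through_pt. exact Hrho.
  - rewrite line_through_cross. exact Hc'.
  - pose proof (Hmax _ r' HnfT Hr'). lia.
  - exact Hcc.
Qed.

Lemma window_contradiction : False.
Proof.
  destruct (added_points_project true) as (lt & Hlt & Hinlt).
  destruct (added_points_project false) as (lf & Hlf & Hinlf).
  assert (Hbound : N * N + 1 <= length (list_prod lt lf)).
  { apply (new_points_bound (fun t => T_iter Z t A) _ s).
    - intros t x Hx. rewrite T_iter_S. left. exact Hx.
    - intros t Ht. destruct (added_each_step t ltac:(lia)) as (x & Hx).
      exists x. split; [apply Hx | split; [apply Hx|]]. destruct x as [p q].
      apply in_prod; [exact (Hinlt t _ ltac:(lia) Hx) | exact (Hinlf t _ ltac:(lia) Hx)]. }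
  rewrite length_prod in Hbound. nia.
Qed.

End Window.

Lemma window_fills_line A s :
  (forall t, s <= t < s + (N * N + 2) -> exists x, added_at Z A t x) ->
  exists t l, s <= t < s + (N * N + 2) /\
    full_line (T_iter Z (S t) A) l /\ ~ full_line (T_iter Z t A) l.
Proof.
  intros Hadded. apply NNPP. intros Hnone. apply (window_contradiction A s Hadded).
  intros t l Ht Hfull. apply NNPP. intros Hnf. apply Hnone. eauto.
Qed.

Lemma dynamics_halts A :
  exists t, t <= 2 * N * (N * N + 2) + 1 /\ forall x, ~ added_at Z A t x.
Proof.
  apply NNPP. intros Hnever.
  assert (Hadded : forall t, t <= 2 * N * (N * N + 2) + 1 -> exists x, added_at Z A t x).
  { intros t Ht. apply NNPP. intros Hnone. apply Hnever. exists t. split; [exact Ht|].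
    intros x Hx. apply Hnone. eauto. }
  destruct (full_lines_of_windows Z A (N * N + 2) (2 * N)) as (ls & Hnd & Hlen & Hfull).
  { intros i Hi. apply window_fills_line. intros t Ht. apply Hadded. nia. }
  destruct (Hadded (S (2 * N * (N * N + 2))) ltac:(lia)) as (x & _ & Hx).
  apply Hx. rewrite T_iter_S. apply (T_step_full_of_full_lines _ ls Hnd); [lia | exact Hfull].
Qed.

End Dynamics.

Theorem mainTheorem7 :
  forall Z : pset, zero_set Z -> finite_pset Z ->
  exists Tmax : nat, forall A : pset,
    forall x : pt, T_iter Z (Tmax + 1) A x <-> T_iter Z Tmax A x.
Proof.
  intros Z Hzero Hfin.
  destruct (finite_pset_bounded Z Hfin) as (N & Hbound).
  exists (2 * N * (N * N + 2) + 1). intros A x.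
  destruct (dynamics_halts Z N (zero_set_down_closed Z Hzero) Hbound A) as (t & Ht & Hstill).
  set (Tmax := 2 * N * (N * N + 2) + 1) in *.
  rewrite (T_iter_stationary Z A t Hstill (Tmax + 1)), (T_iter_stationary Z A t Hstill Tmax)
    by lia.
  reflexivity.
Qed.
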